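(* Let $c>0$. The planar system $$\dot x=x(1-y+cx),\qquad \dot y=y(-1+x)$$ has no formal first integrals.
   Context: A formal first integral is a non-constant formal power series $f\in\mathbb{C}[[x,y]]$ with $x(1-y+cx)\partial_x f+y(-1+x)\partial_y f=0$. *)

From HB Require Import structures.
From mathcomp Require Import all_boot all_order all_algebra.
From mathcomp Require Import complex.
From mathcomp Require Import reals.
Set Implicit Arguments. Unset Strict Implicit. Unset Printing Implicit Defensive.
Import Order.TTheory GRing.Theory Num.Theory ComplexField.
Local Open Scope ring_scope.

(* A formal power series  f = sum_{i,j} f i j x^i y^j  in K[[x,y]],
   represented by its coefficient array. *)
Definition fps2 (K : Type) := nat -> nat -> K.

Section FPS2.
Variable K : comNzRingType.

Definition fps2_C (a : K) : fps2 K := fun i j => if (i == 0%N) && (j == 0%N) then a else 0.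
Definition fps2_X : fps2 K := fun i j => if (i == 1%N) && (j == 0%N) then 1 else 0.
Definition fps2_Y : fps2 K := fun i j => if (i == 0%N) && (j == 1%N) then 1 else 0.
Definition fps2_add (f g : fps2 K) : fps2 K := fun i j => f i j + g i j.
Definition fps2_opp (f : fps2 K) : fps2 K := fun i j => - f i j.
Definition fps2_mul (f g : fps2 K) : fps2 K := fun i j =>
  \sum_(k < i.+1) \sum_(l < j.+1) f k l * g (i - k)%N (j - l)%N.
Definition fps2_dx (f : fps2 K) : fps2 K := fun i j => (i.+1)%:R * f i.+1 j.
Definition fps2_dy (f : fps2 K) : fps2 K := fun i j => (j.+1)%:R * f i j.+1.

Definition fps2_nonconstant (f : fps2 K) : Prop :=
  exists i j, ((i, j) != (0%N, 0%N)) /\ f i j != 0.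
End FPS2.
Arguments fps2_X {K}.
Arguments fps2_Y {K}.

(* The vector field  x(1 - y + c x) d/dx + y(-1 + x) d/dy  applied to f. *)
Definition vf_apply (R : realType) (c : R) (f : fps2 R[i]) : fps2 R[i] :=
  fps2_add
    (fps2_mul (fps2_mul fps2_X
                 (fps2_add (fps2_add (fps2_C 1) (fps2_opp fps2_Y))
                           (fps2_mul (fps2_C (c%:C)%C) fps2_X)))
              (fps2_dx f))
    (fps2_mul (fps2_mul fps2_Y (fps2_add (fps2_C (-1)) fps2_X))
              (fps2_dy f)).

Definition formal_first_integral (R : realType) (c : R) (f : fps2 R[i]) : Prop :=
  fps2_nonconstant f /\ vf_apply c f = (fun _ _ => 0).

From HB Require Import structures.
From mathcomp Require Import all_boot all_order all_algebra.
From mathcomp Require Import complex reals ring.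
Import Order.TTheory GRing.Theory Num.Theory ComplexField.
Local Open Scope ring_scope.
Local Open Scope complex_scope.

(* Comparing the coefficients of x^i y^j, a first integral f satisfies
     (i - j) f_{i,j} + (c (i - 1) + j) f_{i-1,j} - i f_{i,j-1} = 0,
   and all its coefficients of positive degree vanish by induction on the
   total degree.  Off the diagonal the factor i - j determines f_{i,j} from
   coefficients of lower degree.  On the diagonal, the equations at (k+1,k)
   and (k,k+1) express f_{k+1,k} and f_{k,k+1} through f_{k,k} (the
   off-diagonal neighbours of the same degree being already zero), and
   substituting them into the equation at (k+1,k+1) leaves c k f_{k,k} = 0. *)

Set Implicit Arguments. Unset Strict Implicit. Unset Printing Implicit Defensive.

Section Fps2Algebra.
Variable K : comNzRingType.
Implicit Types (a : K) (f g h : fps2 K).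

Definition fps2_monomial a (p q : nat) : fps2 K :=
  fun i j => if (i == p) && (j == q) then a else 0.

Lemma fps2_monomialM a p q g i j :
  fps2_mul (fps2_monomial a p q) g i j =
  if (p <= i)%N && (q <= j)%N then a * g (i - p)%N (j - q)%N else 0.
Proof.
rewrite /fps2_mul /fps2_monomial.
transitivity (\sum_(k < i.+1 | k == p :> nat)
                \sum_(l < j.+1 | l == q :> nat) a * g (i - k)%N (j - l)%N).
  rewrite [RHS]big_mkcond; apply: eq_bigr => k _ /=.
  case: eqP => _ /=; last by rewrite big1 // => l _; rewrite mul0r.
  by rewrite [RHS]big_mkcond; apply: eq_bigr => l _; case: eqP; rewrite ?mul0r.
rewrite (big_ord1_eq _
  (fun k => \sum_(l < j.+1 | l == q :> nat) a * g (i - k)%N (j - l)%N)).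
rewrite (big_ord1_eq _ (fun l => a * g (i - p)%N (j - l)%N)) !ltnS.
by case: (p <= i)%N.
Qed.

Lemma fps2_mulDl f g h i j :
  fps2_mul (fps2_add f g) h i j = fps2_mul f h i j + fps2_mul g h i j.
Proof.
rewrite /fps2_mul -big_split; apply: eq_bigr => k _.
by rewrite -big_split; apply: eq_bigr => l _; rewrite mulrDl.
Qed.

Lemma eq_fps2_mull f f' g : f =2 f' -> fps2_mul f g =2 fps2_mul f' g.
Proof.
by move=> eq_f i j; apply: eq_bigr => k _; apply: eq_bigr => l _; rewrite eq_f.
Qed.

End Fps2Algebra.

Section VectorField.
Variables (R : realType) (c : R).
Implicit Type f : fps2 R[i].

Lemma vf_cofactor_xE :
  fps2_mul fps2_X (fps2_add (fps2_add (fps2_C 1) (fps2_opp fps2_Y))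
                            (fps2_mul (fps2_C c%:C) fps2_X))
  =2 fps2_add (fps2_add (fps2_monomial (1 : R[i]) 1 0) (fps2_monomial (-1) 1 1))
              (fps2_monomial c%:C 2 0).
Proof.
move=> i j.
rewrite /fps2_add /fps2_opp fps2_monomialM fps2_monomialM /fps2_monomial.
by case: i => [|[|[|i]]]; case: j => [|[|j]];
  rewrite /= ?subn0 ?subSS /= ?(mulr1, mulr0, mul1r, addr0, add0r, oppr0).
Qed.

Lemma vf_cofactor_yE :
  fps2_mul fps2_Y (fps2_add (fps2_C (-1)) fps2_X)
  =2 fps2_add (fps2_monomial (-1 : R[i]) 0 1) (fps2_monomial 1 1 1).
Proof.
move=> i j; rewrite /fps2_add fps2_monomialM /fps2_monomial.
by case: i => [|[|i]]; case: j => [|[|j]];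
  rewrite /= ?subn0 ?subSS /= ?(mulr1, mulr0, mul1r, addr0, add0r, oppr0).
Qed.

Lemma vf_apply_coef f i j :
  vf_apply c f i j =
    (i%:R - j%:R) * f i j
    + (if i is i'.+1 then (c%:C * i'%:R + j%:R) * f i' j else 0)
    - (if j is j'.+1 then i%:R * f i j' else 0).
Proof.
rewrite /vf_apply /fps2_add.
rewrite (eq_fps2_mull _ vf_cofactor_xE) (eq_fps2_mull _ vf_cofactor_yE).
rewrite !fps2_mulDl !fps2_monomialM /fps2_dx /fps2_dy.
by case: i => [|[|i]]; case: j => [|j]; rewrite /= ?subSS ?subn1 /= ?subn0; ring.
Qed.

End VectorField.

Section NoFirstIntegral.
Variables (R : realType) (c : R) (f : fps2 R[i]).
Hypothesis c_neq0 : c != 0.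
Hypothesis f_invariant : forall i j, vf_apply c f i j = 0.

Lemma coef_recurrence i j :
  (i%:R - j%:R) * f i j
  + (if i is i'.+1 then (c%:C * i'%:R + j%:R) * f i' j else 0)
  - (if j is j'.+1 then i%:R * f i j' else 0) = 0.
Proof. by rewrite -vf_apply_coef f_invariant. Qed.

Lemma diag_coef_eq0 k : f k.+2 k = 0 -> f k k.+2 = 0 -> f k.+1 k.+1 = 0.
Proof.
move=> f20 f02.
have /= E21 := coef_recurrence k.+2 k.+1.
have /= E12 := coef_recurrence k.+1 k.+2.
have /= E22 := coef_recurrence k.+2 k.+2.
have u_eq : f k.+2 k.+1 = - ((c%:C + 1) * k.+1%:R * f k.+1 k.+1).
  by rewrite -[LHS]subr0 -{1}E21 f20; ring.
have v_eq : f k.+1 k.+2 = - (k.+1%:R * f k.+1 k.+1).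
  by rewrite -[LHS]addr0 -{1}E12 f02; ring.
have : c%:C * k.+1%:R * f k.+1 k.+1 = 0 by rewrite -E22 u_eq v_eq; ring.
move/eqP; rewrite !mulf_eq0 pnatr_eq0 eq_complex /= eqxx andbT (negbTE c_neq0).
by move/eqP.
Qed.

Lemma offdiag_coef_eq0 d :
    (forall i j, (0 < i + j < d)%N -> f i j = 0) ->
  forall i j, (i + j = d)%N -> i != j -> f i j = 0.
Proof.
move=> lower i j deg_ij neq_ij; have := coef_recurrence i j.
have -> : (if i is i'.+1 then (c%:C * i'%:R + j%:R) * f i' j else 0) = 0.
  case: i deg_ij {neq_ij} => [|i] //= deg_ij.
  have [/eqP|pos] := posnP (i + j).
    by rewrite addn_eq0 => /andP[/eqP-> /eqP->]; rewrite mulr0 add0r mul0r.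
  by rewrite lower ?mulr0 // pos -deg_ij addSn ltnSn.
have -> : (if j is j'.+1 then i%:R * f i j' else 0) = 0.
  case: j deg_ij {neq_ij} => [|j] //= deg_ij.
  have [/eqP|pos] := posnP (i + j).
    by rewrite addn_eq0 => /andP[/eqP-> _]; rewrite mul0r.
  by rewrite lower ?mulr0 // pos -deg_ij addnS ltnSn.
rewrite addr0 subr0 => /eqP; rewrite mulf_eq0 subr_eq0 eqr_nat (negbTE neq_ij).
by move/eqP.
Qed.

Lemma coef_eq0_below d i j : (0 < i + j < d)%N -> f i j = 0.
Proof.
elim: d i j => [|d IH] i j; first by rewrite ltn0 andbF.
rewrite ltnS [(_ <= d)%N]leq_eqVlt => /andP[pos /orP[/eqP deg|lt]]; last first.
  by apply: IH; rewrite pos lt.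
have [eq_ij|] := eqVneq i j; last exact: offdiag_coef_eq0 IH _ _ deg.
case: i eq_ij pos deg => [<- //|k <- _ deg].
apply: diag_coef_eq0; apply: (offdiag_coef_eq0 IH).
- by rewrite -deg addSn addnS.
- by rewrite gtn_eqF // leqnSn.
- by rewrite -deg addSn addnS.
- by rewrite ltn_eqF // leqnSn.
Qed.

End NoFirstIntegral.

Theorem proposition3p3 (R : realType) (c : R) (hc : 0 < c) :
  ~ exists f : fps2 R[i], formal_first_integral c f.
Proof.
case=> f [[i [j [ij_neq0 fij_neq0]]] f_invariant].
move/eqP: fij_neq0; apply.
apply: (coef_eq0_below (lt0r_neq0 hc) _ (d := (i + j).+1)).
  by move=> k l; rewrite f_invariant.
by rewrite ltnSn andbT lt0n addn_eq0 -xpair_eqE.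
Qed.
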